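(* The category $\mathbf{CA}$ of conditional algebras with conditional homomorphisms and the category $\mathbf{CS}$ of conditional spaces with conditional functions are dually equivalent.
   Context: A conditional algebra is $\langle A,\to\rangle$ with $A$ a Boolean algebra and $\to$ binary with $a\to1=1$, $(a\to b)\wedge(a\to c)=a\to(b\wedge c)$, $(a\vee b)\to c\le(a\to c)\wedge(b\to c)$. A conditional homomorphism is a Boolean homomorphism $h$ with $h(a\to b)=h(a)\to h(b)$. A conditional space is $\langle X,\tau,T\rangle$ with $\langle X,\tau\rangle$ a Boolean space and $T\subseteq X\times\mathcal{C}(\tau)\times X$ ($\mathcal{C}(\tau)$ the closed sets) satisfying: (T1) $T(x,Y)=\{y:T(x,Y,y)\}$ is closed for every $x$ and closed $Y$; (T2) for clopen $U,V$, $U\to_T V=\{x:\text{for all closed }Z\subseteq U,\ T(x,Z)\subseteq V\}$ is clopen; (T3) for closed $Y$, $T(x,Y,y)$ iff $T(x,U,y)$ for all clopen $U\supseteq Y$. A conditional function between conditional spaces $\langle X_1,\tau_1,T_1\rangle$, $\langle X_2,\tau_2,T_2\rangle$ is a continuous $f\colon X_1\to X_2$ such that for all $x\in X_1$ and clopen $U,V\subseteq X_2$: $T_1(x,f^{-1}[U])\subseteq f^{-1}[V]$ iff $T_2(f(x),U)\subseteq V$. In both categories composition is composition of maps and identities are identity maps. *)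

From HB Require Import structures.
From mathcomp Require Import all_boot all_order.
From mathcomp Require Import all_classical all_reals all_analysis.
Set Implicit Arguments. Unset Strict Implicit. Unset Printing Implicit Defensive.
Import Order.Theory.
Local Open Scope classical_set_scope.

Record Cat := MkCat {
  ob : Type;
  hom : ob -> ob -> Type;
  idm : forall A, hom A A;
  comp : forall A B C, hom B C -> hom A B -> hom A C }.
Arguments idm {c} A.
Arguments comp {c A B C}.

Record CoFunctor (C D : Cat) := MkCoFunctor {
  fob : ob C -> ob D;
  fmor : forall A B, @hom C A B -> @hom D (fob B) (fob A);
  fmor_id : forall A, fmor (idm A) = idm (fob A);
  fmor_comp : forall A B E (f : @hom C A B) (g : @hom C B E),
      fmor (comp g f) = comp (fmor f) (fmor g) }.
Arguments fob {C D}.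
Arguments fmor {C D} _ {A B}.

Definition is_iso (C : Cat) (A B : ob C) (f : @hom C A B) : Prop :=
  exists g : @hom C B A, comp g f = idm A /\ comp f g = idm B.

Definition dually_equivalent (C D : Cat) : Prop :=
  exists (F : CoFunctor C D) (G : CoFunctor D C)
         (eta : forall A : ob C, @hom C A (fob G (fob F A)))
         (eps : forall X : ob D, @hom D X (fob F (fob G X))),
    (forall A, is_iso (eta A)) /\
    (forall A B (f : @hom C A B),
        comp (fmor G (fmor F f)) (eta A) = comp (eta B) f) /\
    (forall X, is_iso (eps X)) /\
    (forall X Y (f : @hom D X Y),
        comp (fmor F (fmor G f)) (eps X) = comp (eps Y) f).

(* A Boolean algebra is a complemented bounded distributive lattice     *)
(* (mathcomp's ctbDistrLatticeType).                                    *)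
Section CondAlg.
Local Open Scope order_scope.

Record CondAlg := MkCondAlg {
  ca_disp : Order.disp_t;
  ca_car : ctbDistrLatticeType ca_disp;
  ca_imp : ca_car -> ca_car -> ca_car;
  ca_imp_top : forall a : ca_car, ca_imp a \top = \top;
  ca_imp_meet : forall a b c : ca_car,
      ca_imp a b `&` ca_imp a c = ca_imp a (b `&` c);
  ca_imp_join : forall a b c : ca_car,
      ca_imp (a `|` b) c <= ca_imp a c `&` ca_imp b c }.

Definition is_bool_hom (A B : CondAlg) (h : ca_car A -> ca_car B) : Prop :=
  [/\ forall x y, h (x `&` y) = h x `&` h y,
      forall x y, h (x `|` y) = h x `|` h y,
      h \bot = \bot, h \top = \top &
      forall x, h (~` x) = ~` h x].

Definition is_cond_hom (A B : CondAlg) (h : ca_car A -> ca_car B) : Prop :=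
  is_bool_hom h /\ forall a b, h (ca_imp a b) = ca_imp (h a) (h b).

End CondAlg.

Definition CAhom (A B : CondAlg) := {h : ca_car A -> ca_car B | is_cond_hom h}.

Lemma is_cond_hom_id (A : CondAlg) : is_cond_hom (@id (ca_car A)).
Proof. by split. Qed.

Lemma is_cond_hom_comp (A B C : CondAlg) (g : ca_car B -> ca_car C)
  (f : ca_car A -> ca_car B) : is_cond_hom g -> is_cond_hom f -> is_cond_hom (g \o f).
Proof.
move=> [[g1 g2 g3 g4 g5] g6] [[f1 f2 f3 f4 f5] f6]; split; last by move=> a b /=; rewrite f6 g6.
by split => [x y|x y||| x] /=; rewrite ?f1 ?g1 ?f2 ?g2 ?f3 ?g3 ?f4 ?g4 ?f5 ?g5.
Qed.

Definition CA : Cat := @MkCat CondAlg CAhom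
  (fun A => exist _ id (is_cond_hom_id A))
  (fun A B C g f => exist _ (sval g \o sval f) (is_cond_hom_comp (svalP g) (svalP f))).

Definition boolean_space (X : topologicalType) : Prop :=
  [/\ compact [set: X], hausdorff_space X &
      forall (x : X) (U : set X), open U -> U x ->
        exists V : set X, [/\ clopen V, V x & V `<=` U]].

Definition Tsec (X : Type) (T : X -> set X -> X -> Prop) (x : X) (Y : set X) : set X :=
  [set y | T x Y y].

Definition Timp (X : topologicalType) (T : X -> set X -> X -> Prop) (U V : set X) : set X :=
  [set x | forall Z : set X, closed Z -> Z `<=` U -> Tsec T x Z `<=` V].

(* T is a ternary relation on X x C(tau) x X: its middle component is always
   a closed set (the field cs_T_closed). *)
Record CondSpace := MkCondSpace {
  cs_car : topologicalType;
  cs_bool : boolean_space cs_car;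
  cs_T : cs_car -> set cs_car -> cs_car -> Prop;
  cs_T_closed : forall x Y y, cs_T x Y y -> closed Y;
  cs_T1 : forall x Y, closed Y -> closed (Tsec cs_T x Y);
  cs_T2 : forall U V, clopen U -> clopen V -> clopen (Timp cs_T U V);
  cs_T3 : forall Y, closed Y -> forall x y,
      cs_T x Y y <-> (forall U, clopen U -> Y `<=` U -> cs_T x U y) }.

Definition is_cond_fun (X1 X2 : CondSpace) (f : cs_car X1 -> cs_car X2) : Prop :=
  continuous f /\
  forall (x : cs_car X1) (U V : set (cs_car X2)), clopen U -> clopen V ->
    (Tsec (@cs_T X1) x (f @^-1` U) `<=` f @^-1` V <->
     Tsec (@cs_T X2) (f x) U `<=` V).

Definition CShom (X Y : CondSpace) := {f : cs_car X -> cs_car Y | is_cond_fun f}.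

Lemma is_cond_fun_id (X : CondSpace) : is_cond_fun (@id (cs_car X)).
Proof. by split => // x; exact: cvg_id. Qed.

Lemma is_cond_fun_comp (X Y Z : CondSpace) (g : cs_car Y -> cs_car Z)
  (f : cs_car X -> cs_car Y) : is_cond_fun g -> is_cond_fun f -> is_cond_fun (g \o f).
Proof.
move=> [gc gT] [fc fT]; split.
  by move=> x; apply: continuous_comp; [exact: fc | exact: gc].
move=> x U V cU cV; rewrite -(gT (f x) U V cU cV).
have cU' : clopen (g @^-1` U).
  by case: cU => oU clU; split; [apply: open_comp => // y _; exact: gc | exact: preimage_closed].
have cV' : clopen (g @^-1` V).
  by case: cV => oV clV; split; [apply: open_comp => // y _; exact: gc | exact: preimage_closed].
exact: (fT x _ _ cU' cV').
Qed.

Definition CS : Cat := @MkCat CondSpace CShom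
  (fun X => exist _ id (is_cond_fun_id X))
  (fun X Y Z g f => exist _ (sval g \o sval f) (is_cond_fun_comp (svalP g) (svalP f))).

(** Stone duality, extended by the implication.  A conditional algebra [A]
    goes to its space of ultrafilters, where [T p Y q] holds when [q] contains
    every [b] with [a ~> b] in [p] for some [a] whose Stone set contains [Y];
    a conditional space goes to its algebra of clopens with [U ~> V] the set
    [U ->_T V].  The Boolean parts of the unit [a |-> stone a] and counit
    [x |-> {U | x \in U}] are classical (ultrafilter lemma and compactness);
    what remains is the identity
    [Tsec T p (stone a) `<=` stone b <-> a ~> b \in p], whose hard direction
    extends the filter [{c | a ~> c \in p}] to an ultrafilter avoiding [b]. *)

From HB Require Import structures.
From mathcomp Require Import all_boot all_order.
From mathcomp Require Import all_classical all_reals all_analysis.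
Set Implicit Arguments. Unset Strict Implicit. Unset Printing Implicit Defensive.
Import Order.Theory.
Local Open Scope classical_set_scope.

Lemma sval_inj (T : Type) (P : T -> Prop) : injective (@sval T P).
Proof. by case=> [x px] [y py] /= exy; exact: eq_exist. Qed.

Section BoolFilter.
Local Open Scope order_scope.
Variables (d : Order.disp_t) (L : ctbDistrLatticeType d).
Implicit Types (S p : set L) (a b c : L).

Definition is_filter S :=
  [/\ S \top, (forall a b, S a -> S b -> S (a `&` b)) &
      (forall a b, a <= b -> S a -> S b)].

Definition proper_filter S := is_filter S /\ ~ S \bot.

Definition is_ultra p :=
  (forall a b, p (a `&` b) <-> p a /\ p b) /\ (forall a, p (~` a) <-> ~ p a).

Lemma ultraI p a b : is_ultra p -> p (a `&` b) <-> p a /\ p b.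
Proof. by case=> + _; apply. Qed.

Lemma ultraC p a : is_ultra p -> p (~` a) <-> ~ p a.
Proof. by case=> _; apply. Qed.

Lemma ultra_le p a b : is_ultra p -> a <= b -> p a -> p b.
Proof. by move=> up /meet_l <- /(ultraI _ _ up) []. Qed.

Lemma ultra_bot p : is_ultra p -> ~ p \bot.
Proof.
by move=> up; rewrite -(meetxC \top) => /(ultraI _ _ up) [pT /(ultraC _ up)].
Qed.

Lemma ultra_top p : is_ultra p -> p \top.
Proof. by move=> up; rewrite -compl0; apply/(ultraC _ up)/ultra_bot. Qed.

Lemma ultraU p a b : is_ultra p -> p (a `|` b) <-> p a \/ p b.
Proof.
move=> up; rewrite -[a `|` b]complK complU (ultraC _ up) (ultraI _ _ up) !(ultraC _ up).
split=> [nab|[pa [] | pb []] //].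
by have [pa|npa] := pselect (p a); [left | right; apply: contrapT => ?; exact: nab].
Qed.

Definition principal_filter a := [set c | a <= c].

Lemma principal_filter_filter a : is_filter (principal_filter a).
Proof.
rewrite /principal_filter; split=> [|b c ab ac|b c bc ab] /=; first exact: lex1.
- by rewrite lexI ab ac.
- exact: le_trans bc.
Qed.

Definition adjoin_filter S a := [set c | exists2 s, S s & s `&` a <= c].

Section Adjoin.
Variables (S : set L) (a : L).
Hypothesis fS : is_filter S.

Lemma adjoin_filter_filter : is_filter (adjoin_filter S a).
Proof.
have [ST SI SU] := fS; split.
- by exists \top => //; rewrite lex1.
- move=> x y [s Ss sx] [t St ty]; exists (s `&` t); first exact: SI.
  rewrite lexI (le_trans _ sx) ?(le_trans _ ty) //; apply: leI2 => //.
  + exact: leIr.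
  + exact: leIl.
- by move=> x y xy [s Ss sx]; exists s => //; exact: le_trans xy.
Qed.

Lemma sub_adjoin_filter : S `<=` adjoin_filter S a.
Proof. by move=> s Ss; exists s => //; exact: leIl. Qed.

Lemma adjoin_filter_in : adjoin_filter S a a.
Proof. by case: fS => ST _ _; exists \top => //; exact: leIr. Qed.

Lemma adjoin_filter_proper : ~ S (~` a) -> ~ adjoin_filter S a \bot.
Proof.
case: fS => _ _ SU nSa [s Ss]; rewrite lex0 disj_leC => sa.
by apply: nSa; exact: SU sa Ss.
Qed.

End Adjoin.

Lemma maximal_filter_ultra p : proper_filter p ->
  (forall q, proper_filter q -> p `<=` q -> q `<=` p) -> is_ultra p.
Proof.
move=> [[pT pI pU] pb] pmax; split=> [a b|a].
  split=> [pab|[]]; last exact: pI.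
  by split; apply: pU pab; [exact: leIl | exact: leIr].
split=> [pCa pa|npa]; first by apply: pb; rewrite -(meetxC a); exact: pI.
apply: contrapT => npCa; apply: npa; apply: (pmax (adjoin_filter p a)).
- split; [exact: adjoin_filter_filter | exact: adjoin_filter_proper].
- exact: sub_adjoin_filter.
- exact: adjoin_filter_in.
Qed.

Lemma proper_filter_bigcup (F : set (set L)) : F !=set0 -> total_on F subset ->
  (forall X, F X -> proper_filter X) -> proper_filter (\bigcup_(X in F) X).
Proof.
move=> [X0 FX0] Ftot Fp; split; last by case=> X /Fp [_].
split.
- by exists X0 => //; have [[]] := Fp _ FX0.
- move=> a b [X FX Xa] [Y FY Yb].
  have [XY|YX] := Ftot _ _ FX FY.
  + by exists Y => //; have [[_ YI _] _] := Fp _ FY; exact: YI (XY _ Xa) Yb.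
  + by exists X => //; have [[_ XI _] _] := Fp _ FX; exact: XI Xa (YX _ Yb).
- move=> a b ab [X FX Xa]; exists X => //.
  by have [[_ _ XU] _] := Fp _ FX; exact: XU ab Xa.
Qed.

End BoolFilter.

Section UltraExistence.
Variables (d : Order.disp_t) (L : ctbDistrLatticeType d).
Implicit Types (S p : set L).

(** Zorn's lemma is applied to the sets [A] with [S `|` A] a proper filter,
    a family which, as [Zorn_bigcup] requires, contains [set0]. *)
Lemma maximal_filter_ext S : proper_filter S ->
  exists2 p, proper_filter p /\ S `<=` p &
    forall q, proper_filter q -> p `<=` q -> q `<=` p.
Proof.
move=> pS.
have [A [pSA Amax]] : exists A, proper_filter (S `|` A) /\
    forall B, A `<` B -> ~ proper_filter (S `|` B).
  apply: (@Zorn_bigcup _ (fun A => proper_filter (S `|` A))) => F Fp Ftot /=.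
  suff -> : S `|` \bigcup_(X in F) X =
      \bigcup_(Y in [set S `|` X | X in F] `|` [set S]) Y.
    apply: proper_filter_bigcup; first by exists S; right.
    + move=> _ _ [[X FX <-]|->] [[Y FY <-]|->]; [|right|left|left] => //.
      by have [XY|YX] := Ftot _ _ FX FY; [left|right]; exact: setUS.
    + by move=> _ [[X FX <-]|->] //; exact: Fp.
  apply/seteqP; split=> a.
  - case=> [Sa|[X FX Xa]]; first by exists S => //; right.
    by exists (S `|` X); [left; exists X | right].
  - by case=> _ [[X FX <-]|->] /=; [case=> [Sa|Xa]; [left|right; exists X] | left].
exists (S `|` A) => // q pq Aq; apply: contrapT => nqA.
apply: (Amax q); last by rewrite (setUidr (subset_trans (@subsetUl _ S A) Aq)).
split; first exact: subset_trans Aq.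
by move=> qA; apply: nqA; exact: subset_trans qA (@subsetUr _ S A).
Qed.

Lemma ultra_ext S : proper_filter S -> exists2 p, is_ultra p & S `<=` p.
Proof.
move=> /maximal_filter_ext [p [pp Sp] pmax].
by exists p => //; exact: maximal_filter_ultra.
Qed.

Lemma ultra_avoid S b : is_filter S -> ~ S b ->
  exists p, [/\ is_ultra p, S `<=` p & ~ p b].
Proof.
move=> fS nSb.
have [p up Sp] : exists2 p, is_ultra p & adjoin_filter S (~` b)%O `<=` p.
  apply: ultra_ext; split; first exact: adjoin_filter_filter.
  by apply: (adjoin_filter_proper fS); rewrite complK.
exists p; split=> //; first exact: subset_trans (sub_adjoin_filter (~` b)%O) Sp.
by apply/(ultraC _ up)/Sp; exact: (adjoin_filter_in _ fS).
Qed.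

End UltraExistence.

Definition clop (X : topologicalType) := {U : set X | clopen U}.
HB.instance Definition _ (X : topologicalType) := gen_eqMixin (clop X).
HB.instance Definition _ (X : topologicalType) := gen_choiceMixin (clop X).

Section ClopenAlgebra.
Variable X : topologicalType.
Implicit Types U V W : clop X.

Definition clop_meet U V : clop X := exist _ (sval U `&` sval V) (clopenI (svalP U) (svalP V)).
Definition clop_join U V : clop X := exist _ (sval U `|` sval V) (clopenU (svalP U) (svalP V)).
Definition clop_compl U : clop X := exist _ (~` sval U) (@clopenC _ _ set0 (svalP U)).
Definition clop_bot : clop X := exist _ set0 clopen0.
Definition clop_top : clop X := exist _ setT clopenT.
Definition clop_le U V := clop_meet U V == U.
Definition clop_lt U V := (V != U) && clop_le U V.

Fact clop_meetC : commutative clop_meet.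
Proof. by move=> U V; apply: sval_inj; exact: setIC. Qed.
Fact clop_joinC : commutative clop_join.
Proof. by move=> U V; apply: sval_inj; exact: setUC. Qed.
Fact clop_meetA : associative clop_meet.
Proof. by move=> U V W; apply: sval_inj; exact: setIA. Qed.
Fact clop_joinA : associative clop_join.
Proof. by move=> U V W; apply: sval_inj; exact: setUA. Qed.
Fact clop_joinKI V U : clop_meet U (clop_join U V) = U.
Proof. by apply: sval_inj; apply: setIidl; exact: subsetUl. Qed.
Fact clop_meetKU V U : clop_join U (clop_meet U V) = U.
Proof. by apply: sval_inj; apply: setUidl; exact: subIsetl. Qed.
Fact clop_meetUl : left_distributive clop_meet clop_join.
Proof. by move=> U V W; apply: sval_inj; exact: setIUl. Qed.
Fact clop_meetxx : idempotent_op clop_meet.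
Proof. by move=> U; apply: sval_inj; exact: setIid. Qed.

HB.instance Definition _ :=
  @Order.isMeetJoinDistrLattice.Build (Order.Disp tt tt) (clop X)
    clop_le clop_lt clop_meet clop_join (fun _ _ => erefl) (fun _ _ => erefl)
    clop_meetC clop_joinC clop_meetA clop_joinA clop_joinKI clop_meetKU
    clop_meetUl clop_meetxx.

Fact clop_le0x U : clop_le clop_bot U.
Proof. by apply/eqP/sval_inj; exact: set0I. Qed.
Fact clop_lex1 U : clop_le U clop_top.
Proof. by apply/eqP/sval_inj; exact: setIT. Qed.

HB.instance Definition _ := @Order.hasBottom.Build (Order.Disp tt tt) (clop X) clop_bot clop_le0x.
HB.instance Definition _ := @Order.hasTop.Build (Order.Disp tt tt) (clop X) clop_top clop_lex1.

Fact clop_joinxC U : clop_join U (clop_compl U) = clop_top.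
Proof. by apply: sval_inj; exact: setUv. Qed.
Fact clop_meetxC U : clop_meet U (clop_compl U) = clop_bot.
Proof. by apply: sval_inj; exact: setICr. Qed.

HB.instance Definition _ :=
  @Order.TBDistrLattice_hasComplement.Build (Order.Disp tt tt) (clop X)
    clop_compl clop_joinxC clop_meetxC.

Lemma clop_subset_le U V : sval U `<=` sval V -> (U <= V)%O.
Proof. by move=> UV; apply/meet_idPl/sval_inj; exact: setIidl. Qed.

End ClopenAlgebra.

Lemma compactT_filter_adherent (X : topologicalType) (F : set_system X) :
  compact [set: X] -> ProperFilter F ->
  exists x, forall C, closed C -> F C -> C x.
Proof.
move=> cpt PF; have [x [_]] := cpt F PF filterT; rewrite clusterE => clx.
by exists x => C cC FC; rewrite (closure_id C).1 //; exact: clx.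
Qed.

Section StoneSpace.
Variables (d : Order.disp_t) (L : ctbDistrLatticeType d).
Implicit Types a b : L.

Definition ultra_spec := {p : set L | is_ultra p}.
HB.instance Definition _ := gen_eqMixin ultra_spec.
HB.instance Definition _ := gen_choiceMixin ultra_spec.

Definition stone a : set ultra_spec := [set p | sval p a].

Definition stone_open (U : set ultra_spec) :=
  forall p, U p -> exists a, sval p a /\ stone a `<=` U.

Fact stone_openT : stone_open setT.
Proof. by move=> p _; exists \top%O; split => //; exact: ultra_top (svalP p). Qed.

Fact stone_openI : setI_closed stone_open.
Proof.
move=> U V oU oV p [/oU [a [pa aU]] /oV [b [pb bV]]].
exists (a `&` b)%O; split; first exact/(ultraI _ _ (svalP p)).
by move=> q /(ultraI _ _ (svalP q)) [qa qb]; split; [exact: aU | exact: bV].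
Qed.

Fact stone_open_bigcup (I : Type) (f : I -> set ultra_spec) :
  (forall i, stone_open (f i)) -> stone_open (\bigcup_i f i).
Proof.
move=> fo p [i _ fip]; have [a [pa afi]] := fo i p fip.
by exists a; split => // q /afi fiq; exists i.
Qed.

HB.instance Definition _ :=
  isOpenTopological.Build ultra_spec stone_openT stone_openI stone_open_bigcup.

Lemma ultra_spec_openE (U : set ultra_spec) : open U = stone_open U.
Proof. by []. Qed.

Lemma stone_le a b : stone a `<=` stone b -> (a <= b)%O.
Proof.
move=> ab; apply: contrapT => nab.
have [p [up ap npb]] := ultra_avoid (principal_filter_filter a) nab.
by apply: npb; apply: (ab (exist _ p up)); exact: (ap a (lexx a)).
Qed.

Lemma stone_inj : injective stone.
Proof. by move=> a b ab; apply/le_anti; rewrite !stone_le // ab. Qed.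

Lemma stoneI a b : stone (a `&` b)%O = stone a `&` stone b.
Proof. by apply/funext => p; apply/propext; exact: (ultraI _ _ (svalP p)). Qed.

Lemma stoneC a : stone (~` a)%O = ~` stone a.
Proof. by apply/funext => p; apply/propext; exact: (ultraC _ (svalP p)). Qed.

Lemma stoneU a b : stone (a `|` b)%O = stone a `|` stone b.
Proof. by apply/funext => p; apply/propext; exact: (ultraU _ _ (svalP p)). Qed.

Lemma stoneT : stone \top%O = setT.
Proof. by apply/seteqP; split => // p _; exact: ultra_top (svalP p). Qed.

Lemma stone0 : stone \bot%O = set0.
Proof. by apply/seteqP; split => // p pb; exact: (ultra_bot (svalP p) pb). Qed.

Lemma open_stone a : open (stone a).
Proof. by rewrite ultra_spec_openE => p pa; exists a; split. Qed.

Lemma clopen_stone a : clopen (stone a).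
Proof.
split; first exact: open_stone.
by rewrite -[a]complK stoneC; apply: open_closedC; exact: open_stone.
Qed.

Lemma stone_separates (p q : ultra_spec) : p != q -> exists a, stone a p /\ ~ stone a q.
Proof.
move=> /eqP npq.
have [a pqa] : exists a, sval p a <> sval q a.
  apply: contrapT => /forallNP pq; apply/npq/sval_inj/funext => a.
  exact: contrapT (pq a).
have [pa|npa] := pselect (sval p a).
  by exists a; split => // qa; apply: pqa; exact/propext.
exists (~` a)%O; rewrite /stone /= (ultraC _ (svalP p)) (ultraC _ (svalP q)).
by split => // nqa; apply: pqa; apply/propext; split => [/npa|/nqa].
Qed.

Lemma ultra_spec_compact : compact [set: ultra_spec].
Proof.
rewrite compact_ultra => F UF _; have PF := ultra_proper.
have FC (U : set ultra_spec) : F (~` U) <-> ~ F U.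
  split=> [FCU FU|nFU]; last by case: (in_ultra_setVsetC U UF).
  by apply: (filter_not_empty F); rewrite -(setICl U); exact: filterI.
pose p0 := [set a | F (stone a)].
have up0 : is_ultra p0.
  split=> [a b|a]; rewrite /p0 /= ?stoneI ?stoneC ?FC //.
  split=> [Fab|[]]; last exact: filterI.
  by split; apply: filterS Fab => ? [].
exists (exist _ p0 up0); split => // B /=; rewrite nbhsE => -[U [oU U0] UB].
have [a [p0a aU]] := oU _ U0.
exact: filterS UB (filterS aU p0a).
Qed.

Lemma ultra_spec_boolean : boolean_space ultra_spec.
Proof.
split; first exact: ultra_spec_compact.
- rewrite open_hausdorff => p q /stone_separates [a [pa nqa]].
  exists (stone a, stone (~` a)%O); first by rewrite !inE stoneC.
  by split; [exact: open_stone | exact: open_stone | rewrite stoneC setICr].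
- move=> p U oU Up; have [a [pa aU]] := oU p Up.
  by exists (stone a); split => //; exact: clopen_stone.
Qed.

(** Otherwise the closed sets [U `&` ~` stone a] with [stone a `<=` U] would
    generate a proper filter without adherent point. *)
Lemma clopen_stoneP (U : set ultra_spec) : clopen U -> exists a, U = stone a.
Proof.
move=> [oU cU].
pose I := [set a | stone a `<=` U].
suff [a Ia Ua] : exists2 a, I a & U `<=` stone a.
  by exists a; apply/seteqP; split.
apply: contrapT => noa.
have FF : Filter (filter_from I (fun a => U `&` ~` stone a)).
  apply: filter_from_filter; first by exists \bot%O; rewrite /I /= stone0.
  move=> a b Ia Ib; exists (a `|` b)%O.
    by rewrite /I /= stoneU => x [/Ia|/Ib].
  by rewrite stoneU => x [Ux nx]; split; split => // h; apply: nx; [left|right].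
have PF : ProperFilter (filter_from I (fun a => U `&` ~` stone a)).
  apply: filter_from_proper => a Ia; apply: contrapT => /set0P/negP/negPn/eqP e.
  apply: noa; exists a => // x Ux; apply: contrapT => nx.
  by have : (U `&` ~` stone a) x by []; rewrite e.
have [x xF] := compactT_filter_adherent ultra_spec_compact PF.
have Ux : U x by apply: xF => //; exists \bot%O; [rewrite /I /= stone0 | move=> ? []].
have [a [xa aU]] := oU x Ux.
have [] : (U `&` ~` stone a) x; last by [].
apply: xF; last by exists a.
by apply: closedI => //; apply: open_closedC; exact: open_stone.
Qed.

End StoneSpace.

Section DualSpace.
Variable A : CondAlg.
Local Notation L := (ca_car A).
Local Notation "a ~> b" := (ca_imp a b) (at level 55, right associativity).
Implicit Types (a b c : L) (p q : ultra_spec L).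

Lemma ca_imp_mono_r a b c : (b <= c)%O -> (a ~> b <= a ~> c)%O.
Proof. by move=> /meet_l <-; rewrite -ca_imp_meet; exact: leIr. Qed.

Lemma ca_imp_anti_l a a' b : (a <= a')%O -> (a' ~> b <= a ~> b)%O.
Proof. by move=> /join_r {1}<-; apply: le_trans (ca_imp_join _ _ _) _; exact: leIl. Qed.

Lemma ca_imp_filter p a : is_filter [set c | sval p (a ~> c)].
Proof.
have up := svalP p; split => /= [|b c pb pc|b c bc pb].
- by rewrite ca_imp_top; exact: ultra_top.
- by rewrite -ca_imp_meet; exact/(ultraI _ _ up).
- exact: ultra_le up (ca_imp_mono_r a bc) pb.
Qed.

Definition ultra_T p (Y : set (ultra_spec L)) q :=
  closed Y /\ forall a, Y `<=` stone a -> forall b, sval p (a ~> b) -> sval q b.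

Lemma ultra_T_stone p a b : Tsec ultra_T p (stone a) `<=` stone b <-> sval p (a ~> b).
Proof.
split=> [Tab|pab q [_ Tq]]; last exact: Tq pab.
apply: contrapT => npab.
have [q [uq pq nqb]] := ultra_avoid (ca_imp_filter p a) npab.
apply: nqb; apply: (Tab (exist _ q uq)); split; first exact: (clopen_stone a).2.
move=> a' aa' c pa'c; apply: pq => /=.
exact: ultra_le (svalP p) (ca_imp_anti_l c (stone_le aa')) pa'c.
Qed.

Lemma Timp_stone a b : Timp ultra_T (stone a) (stone b) = stone (a ~> b).
Proof.
apply/seteqP; split => p /=.
  by move=> Tab; apply/ultra_T_stone; apply: Tab => //; exact: (clopen_stone a).2.
by move=> pab Z cZ Za q [_ Tq]; exact: Tq pab.
Qed.

Lemma ultra_T_closed p Y q : ultra_T p Y q -> closed Y.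
Proof. by case. Qed.

Lemma ultra_T1 p Y : closed Y -> closed (Tsec ultra_T p Y).
Proof.
move=> cY.
have -> : Tsec ultra_T p Y =
    \bigcap_(b in [set b | exists2 a, Y `<=` stone a & sval p (a ~> b)]) stone b.
  apply/seteqP; split => q /= => [[_ Tq] b [a Ya pab]|Tq]; first exact: Tq Ya b pab.
  by split => // a Ya b pab; apply: Tq; exists a.
by apply: closed_bigI => b _; exact: (clopen_stone b).2.
Qed.

Lemma ultra_T2 U V : clopen U -> clopen V -> clopen (Timp ultra_T U V).
Proof.
move=> /clopen_stoneP [a ->] /clopen_stoneP [b ->].
by rewrite Timp_stone; exact: clopen_stone.
Qed.

Lemma ultra_T3 Y : closed Y -> forall p q,
  ultra_T p Y q <-> (forall U, clopen U -> Y `<=` U -> ultra_T p U q).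
Proof.
move=> cY p q; split=> [[_ Tq] U [_ cU] YU|TU].
  by split=> // a Ua; apply: Tq; exact: subset_trans Ua.
by split=> // a Ya; have [_ Tq] := TU _ (clopen_stone a) Ya; exact: Tq.
Qed.

Definition dual_space : CondSpace :=
  @MkCondSpace (ultra_spec L) (@ultra_spec_boolean _ L) ultra_T
    ultra_T_closed ultra_T1 ultra_T2 ultra_T3.

End DualSpace.

Section DualAlgebra.
Variable X : CondSpace.
Local Notation T := (@cs_T X).
Implicit Types U V W : clop (cs_car X).

Lemma Timp_clopenE (U V : set (cs_car X)) x :
  clopen U -> Timp T U V x <-> Tsec T x U `<=` V.
Proof.
move=> cU; split=> [TUV|TUV Z cZ ZU y Txy]; first exact: TUV (cU.2) _.
by apply: TUV; exact: (cs_T3 cZ x y).1 Txy U cU ZU.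
Qed.

Definition clop_imp U V : clop (cs_car X) :=
  exist _ (Timp T (sval U) (sval V)) (cs_T2 (svalP U) (svalP V)).

Fact clop_imp_top U : clop_imp U \top%O = \top%O.
Proof. by apply: sval_inj; apply/seteqP; split. Qed.

Fact clop_imp_meet U V W : (clop_imp U V `&` clop_imp U W)%O = clop_imp U (V `&` W)%O.
Proof.
apply: sval_inj; apply/seteqP; split => x /=.
  by move=> [UV UW] Z cZ ZU y Ty; split; [exact: UV Ty | exact: UW Ty].
by move=> UVW; split => Z cZ ZU y Ty; have [] := UVW Z cZ ZU y Ty.
Qed.

Fact clop_imp_join U V W : (clop_imp (U `|` V) W <= clop_imp U W `&` clop_imp V W)%O.
Proof.
apply: clop_subset_le => x /= UVW.
by split => Z cZ ZU; apply: UVW => // z /ZU; [left | right].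
Qed.

Definition dual_alg : CondAlg :=
  @MkCondAlg _ (clop (cs_car X)) clop_imp clop_imp_top clop_imp_meet clop_imp_join.

End DualAlgebra.

Lemma CAhom_eq (A B : CondAlg) (f g : CAhom A B) : sval f =1 sval g -> f = g.
Proof. by move=> fg; apply/sval_inj/funext. Qed.

Lemma CShom_eq (X Y : CondSpace) (f g : CShom X Y) : sval f =1 sval g -> f = g.
Proof. by move=> fg; apply/sval_inj/funext. Qed.

Lemma is_ultra_preimage (A B : CondAlg) (h : ca_car A -> ca_car B) (p : set (ca_car B)) :
  is_bool_hom h -> is_ultra p -> is_ultra (h @^-1` p).
Proof. by move=> [hI _ _ _ hC] [pI pC]; split=> [a b|a] /=; rewrite ?hI ?hC. Qed.

Definition ultra_map (A B : CondAlg) (h : CAhom A B) (q : ultra_spec (ca_car B)) :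
    ultra_spec (ca_car A) :=
  exist _ (sval h @^-1` sval q) (is_ultra_preimage (svalP h).1 (svalP q)).

Lemma ultra_map_cond (A B : CondAlg) (h : CAhom A B) :
  @is_cond_fun (dual_space B) (dual_space A) (ultra_map h).
Proof.
split.
  apply/continuousP => W; rewrite !ultra_spec_openE => oW q /oW [a [qa aW]].
  by exists (sval h a); split => // q' q'a; exact: aW.
move=> q U V /clopen_stoneP [a ->] /clopen_stoneP [b ->].
change (Tsec (@ultra_T B) q (stone (sval h a)) `<=` stone (sval h b) <->
        Tsec (@ultra_T A) (ultra_map h q) (stone a) `<=` stone b).
by rewrite !ultra_T_stone /= (svalP h).2.
Qed.

Definition dual_space_functor : CoFunctor CA CS.
Proof.
refine (@MkCoFunctor CA CS dual_space
          (fun A B h => exist _ (ultra_map h) (ultra_map_cond h)) _ _).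
- by move=> A; apply: CShom_eq => q; exact: sval_inj.
- by move=> A B E f g; apply: CShom_eq => q; exact: sval_inj.
Defined.

Lemma clopen_preimage (X Y : topologicalType) (f : X -> Y) (U : set Y) :
  continuous f -> clopen U -> clopen (f @^-1` U).
Proof.
move=> fc [oU cU]; split; first by apply: open_comp => // y _; exact: fc.
by apply: preimage_closed => // y _; exact: fc.
Qed.

Definition clop_preimage (X Y : CondSpace) (f : CShom X Y) (U : clop (cs_car Y)) :
    clop (cs_car X) :=
  exist _ (sval f @^-1` sval U) (clopen_preimage (svalP f).1 (svalP U)).

Lemma clop_preimage_cond (X Y : CondSpace) (f : CShom X Y) :
  @is_cond_hom (dual_alg Y) (dual_alg X) (clop_preimage f).
Proof.
split; first by split => [U V|U V|||U]; exact: sval_inj.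
move=> U V; apply: sval_inj; apply/seteqP; split => x /=.
- move=> /(Timp_clopenE _ _ (svalP U)) TUV.
  by apply/(Timp_clopenE _ _ (svalP (clop_preimage f U)))/((svalP f).2 x _ _ (svalP U) (svalP V)).
- move=> /(Timp_clopenE _ _ (svalP (clop_preimage f U))) TUV.
  by apply/(Timp_clopenE _ _ (svalP U))/((svalP f).2 x _ _ (svalP U) (svalP V)).
Qed.

Definition dual_alg_functor : CoFunctor CS CA.
Proof.
refine (@MkCoFunctor CS CA dual_alg
          (fun X Y f => exist _ (clop_preimage f) (clop_preimage_cond f)) _ _).
- by move=> X; apply: CAhom_eq => U; exact: sval_inj.
- by move=> X Y Z f g; apply: CAhom_eq => U; exact: sval_inj.
Defined.

Lemma is_cond_hom_inv (A B : CondAlg) (h : ca_car A -> ca_car B) (g : ca_car B -> ca_car A) :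
  is_cond_hom h -> cancel h g -> cancel g h -> is_cond_hom g.
Proof.
move=> [[hI hU h0 h1 hC] hi] hK gK; have /can_inj hinj := hK.
split; first split.
- by move=> x y; apply: hinj; rewrite hI !gK.
- by move=> x y; apply: hinj; rewrite hU !gK.
- by apply: hinj; rewrite h0 gK.
- by apply: hinj; rewrite h1 gK.
- by move=> x; apply: hinj; rewrite hC !gK.
- by move=> x y; apply: hinj; rewrite hi !gK.
Qed.

Lemma is_cond_fun_inv (X Y : CondSpace) (f : cs_car X -> cs_car Y) (g : cs_car Y -> cs_car X) :
  is_cond_fun f -> continuous g -> cancel f g -> cancel g f -> is_cond_fun g.
Proof.
move=> [_ fT] gc fK gK; split => // y U V cU cV.
have preimK W : f @^-1` (g @^-1` W) = W by apply/funext => x; rewrite /preimage /= fK.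
have := fT (g y) _ _ (clopen_preimage gc cU) (clopen_preimage gc cV).
by rewrite gK !preimK => <-.
Qed.

Section StoneIso.
Variable A : CondAlg.

Definition stone_clop (a : ca_car A) : ca_car (dual_alg (dual_space A)) :=
  exist _ (stone a) (clopen_stone a).

Lemma stone_clop_cond : @is_cond_hom A (dual_alg (dual_space A)) stone_clop.
Proof.
split; first split.
- by move=> a b; apply: sval_inj; exact: stoneI.
- by move=> a b; apply: sval_inj; exact: stoneU.
- by apply: sval_inj; exact: stone0.
- by apply: sval_inj; exact: stoneT.
- by move=> a; apply: sval_inj; exact: stoneC.
- by move=> a b; apply: sval_inj; symmetry; exact: Timp_stone.
Qed.

Definition clop_stone_inv (U : ca_car (dual_alg (dual_space A))) : ca_car A :=
  projT1 (cid (clopen_stoneP (svalP U))).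

Lemma clop_stone_invK : cancel clop_stone_inv stone_clop.
Proof. by move=> U; apply: sval_inj; rewrite /clop_stone_inv; case: cid. Qed.

Lemma stone_clopK : cancel stone_clop clop_stone_inv.
Proof. by move=> a; apply: stone_inj; rewrite /clop_stone_inv; case: cid. Qed.

End StoneIso.

Section PointIso.
Variable X : CondSpace.
Local Notation CL := (clop (cs_car X)).

Lemma is_ultra_point (x : cs_car X) : is_ultra [set U : CL | sval U x].
Proof. by split. Qed.

Definition point_ultra (x : cs_car X) : cs_car (dual_space (dual_alg X)) :=
  exist _ [set U : CL | sval U x] (is_ultra_point x).

Lemma point_ultra_surj (p : ultra_spec CL) : exists x, point_ultra x = p.
Proof.
have PF : ProperFilter (filter_from (sval p) sval).
  apply: filter_from_proper; last first.
    move=> U pU; apply: contrapT => /set0P/negP/negPn/eqP U0.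
    by apply: (ultra_bot (svalP p)); rewrite (_ : \bot%O = U) //; exact: sval_inj.
  apply: filter_from_filter; first by exists \top%O; exact: ultra_top (svalP p).
  by move=> U V pU pV; exists (U `&` V)%O => //; exact/(ultraI _ _ (svalP p)).
have [cX _ _] := cs_bool X.
have [x xp] := compactT_filter_adherent cX PF.
exists x; apply: sval_inj; apply/funext => U; apply/propext; split => /= [Ux|pU].
  apply: contrapT => npU.
  suff : sval (~` U)%O x by [].
  apply: xp; first exact: (svalP (~` U)%O).2.
  by exists (~` U)%O => //; exact/(ultraC _ (svalP p)).
by apply: xp; [exact: (svalP U).2 | exists U].
Qed.

Lemma point_ultra_inj : injective point_ultra.
Proof.
move=> x y xy; apply: contrapT => /eqP nxy.
have [_ hX cb] := cs_bool X.
have [N [oN xN yN]] := hausdorff_accessible hX nxy.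
move: xN yN; rewrite !inE => xN yN.
have [V [cV Vx VN]] := cb x N oN xN.
have : sval (point_ultra x) (exist _ V cV) by [].
by rewrite xy => /VN.
Qed.

Lemma point_ultra_cont : continuous point_ultra.
Proof.
apply/continuousP => W; rewrite ultra_spec_openE => oW.
have -> : point_ultra @^-1` W = \bigcup_(U in [set U : CL | stone U `<=` W]) sval U.
  apply/seteqP; split => x /= => [/oW [U [Ux UW]]|[U UW Ux]]; first by exists U.
  exact: UW.
by apply: bigcup_open => U _; exact: (svalP U).1.
Qed.

Lemma point_ultra_cond : @is_cond_fun X (dual_space (dual_alg X)) point_ultra.
Proof.
split; first exact: point_ultra_cont.
move=> x _ _ /clopen_stoneP [U ->] /clopen_stoneP [V ->].
change (Tsec (@cs_T X) x (sval U) `<=` sval V <->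
        Tsec (@ultra_T (dual_alg X)) (point_ultra x) (stone U) `<=` stone V).
by rewrite ultra_T_stone; exact: (iff_sym (Timp_clopenE _ _ (svalP U))).
Qed.

Definition ultra_point (p : ultra_spec CL) : cs_car X := projT1 (cid (point_ultra_surj p)).

Lemma ultra_pointK : cancel ultra_point point_ultra.
Proof. by move=> p; rewrite /ultra_point; case: cid. Qed.

Lemma point_ultraK : cancel point_ultra ultra_point.
Proof. by move=> x; apply: point_ultra_inj; rewrite ultra_pointK. Qed.

Lemma ultra_point_cont : continuous (ultra_point : cs_car (dual_space (dual_alg X)) -> _).
Proof.
apply/continuousP => N oN; rewrite ultra_spec_openE => p /= Np.
have [_ _ cb] := cs_bool X.
have [V [cV Vp VN]] := cb _ N oN Np.
exists (exist _ V cV); split; first by rewrite -(ultra_pointK p).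
by move=> q qV /=; apply: VN; move: qV; rewrite /stone /= -{1}(ultra_pointK q).
Qed.

End PointIso.

Theorem theorem6p5 : dually_equivalent CA CS.
Proof.
exists dual_space_functor, dual_alg_functor.
exists (fun A => exist _ _ (stone_clop_cond A)).
exists (fun X => exist _ _ (point_ultra_cond X)).
split; [|split; [|split]].
- move=> A; exists (exist _ _ (is_cond_hom_inv (stone_clop_cond A)
                                 (@stone_clopK A) (@clop_stone_invK A))).
  by split; apply: CAhom_eq; [exact: stone_clopK | exact: clop_stone_invK].
- by move=> A B f; apply: CAhom_eq => a; exact: sval_inj.
- move=> X; exists (exist _ _ (is_cond_fun_inv (point_ultra_cond X) (@ultra_point_cont X)
                                 (@point_ultraK X) (@ultra_pointK X))).
  by split; apply: CShom_eq; [exact: point_ultraK | exact: ultra_pointK].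
- by move=> X Y f; apply: CShom_eq => x; exact: sval_inj.
Qed.
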